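(* Let $k\in\{1,\dots,n\}$. Let $S_0=\emptyset$ and, for $t=1,\dots,k$, let $S_t=S_{t-1}\cup\{u_t\}$ where $u_t\in\arg\max_{u\in V\setminus S_{t-1}}\big(r(S_{t-1}\cup\{u\})-r(S_{t-1})\big)$ (ties broken arbitrarily). Then $$r(S_k)\;\ge\;\Big(1-\frac1e\Big)\max_{S\subseteq V,\;|S|=k} r(S).$$
   Context: Let $G=(V,E)$ be a finite tree with $|V|=n$, rooted at a node $s$ (the infection source). For a node $i$: $d_i$ is its depth (number of edges on the path from $s$ to $i$); $A_i$ is the set of ancestors of $i$ (strict, including its parent); $N_i$ is the set of descendants of $i$ (strict, not including $i$); $n_i=|N_i|$. Each edge $e$ carries an independent random variable $X_e\sim\mathrm{Exp}(\lambda)$ with $\lambda>0$, and $Z_i=\sum_{e \text{ on the path from } s \text{ to } i}X_e$ is the infection time of $i$ (so $Z_s=0$; $Z_i$ is a sum of $d_i$ i.i.d. $\mathrm{Exp}(\lambda)$ variables). The immunization time $\tau\ge 0$ is a single random variable, common to all vaccinated nodes and independent of $(X_e)_{e\in E}$. For $S\subseteq V$ (the vaccinated set), a node $i\in S$ becomes immune iff $Z_i>\tau$, and an immune node saves all its descendants. The expected total reward is defined as $r(S)=\mathbb{E}\big[\,\big|\bigcup_{i\in S:\,Z_i>\tau}N_i\big|\,\big]$, the expected number of nodes that are descendants of at least one immune vaccinated node. *)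

From HB Require Import structures.
From mathcomp Require Import all_boot all_order all_algebra.
From mathcomp Require Import all_classical all_reals all_analysis.
Set Implicit Arguments. Unset Strict Implicit. Unset Printing Implicit Defensive.
Import Order.TTheory GRing.Theory Num.Theory.
Local Open Scope classical_set_scope.
Local Open Scope ring_scope.

(* A finite tree on the vertex type [V] rooted at [s] is encoded by its parent
   map: [parent s = s], and iterating [parent] from any vertex reaches [s]
   (after at most #|V| steps).  The edges are the pairs {parent v, v}, v <> s,
   so edges are indexed by the non-root vertices. *)
Definition rooted_tree (V : finType) (s : V) (parent : V -> V) : Prop :=
  parent s = s /\ forall v : V, iter #|V| parent v = s.

(* [anc parent s i j] : i is a strict ancestor of j (i in A_j), i.e. i lies on
   the path from s to j, i <> j.  The path j, parent j, parent^2 j, ... is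
   followed until it first reaches s. *)
Definition anc (V : finType) (s : V) (parent : V -> V) (i j : V) : bool :=
  [exists m : 'I_#|V|.+1,
     [&& (0 < m)%N, iter m parent j == i & iter m.-1 parent j != s]].

Definition desc (V : finType) (s : V) (parent : V -> V) (i : V) : {set V} :=
  [set j | anc s parent i j].

(* edges on the path from s to i, indexed by their lower endpoint *)
Definition path_edges (V : finType) (s : V) (parent : V -> V) (i : V) : {set V} :=
  [set j | ((j == i) || anc s parent j i) && (j != s)].

Section model.
Context {d : measure_display} {Omega : measurableType d} {R : realType}.
Variable P : probability Omega R.
Variables (V : finType) (s : V) (parent : V -> V).
Variable X : V -> Omega -> R.   (* X v = weight of the edge (parent v, v) *)
Variable tau : Omega -> R.      (* immunization time *)

Definition Z (i : V) (w : Omega) : R := \sum_(j in path_edges s parent i) X j w.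

Definition saved (S : {set V}) (w : Omega) : nat :=
  #|\bigcup_(i in S | tau w < Z i w) desc s parent i|.

Definition reward (S : {set V}) : \bar R :=
  ('E_P[fun w => (saved S w)%:R])%E.
End model.

Definition mutually_independent {d : measure_display} {Omega : measurableType d}
  {R : realType} (P : probability Omega R) (I : finType) (D : {set I})
  (Y : I -> Omega -> R) : Prop :=
  forall B : I -> set R, (forall i, measurable (B i)) ->
    P (\bigcap_(i in [set i | i \in D]) (Y i @^-1` B i)) =
    (\prod_(i in D) P (Y i @^-1` B i))%E.

(* S_t = {u_0, ..., u_{t-1}} (0-indexed: u_0 is the paper's u_1) *)
Definition greedy_set (V : finType) (u : nat -> V) (t : nat) : {set V} :=
  [set x | [exists i : 'I_t, u i == x]].

(* Fix an outcome w and let B(w) = {i | tau w < Z_i w} be the set of nodes that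
   would become immune if vaccinated.  The number of saved nodes is then the
   coverage |U_{i in S, i in B(w)} N_i|, and since B takes finitely many values,
   r(S) = sum_B P(B(.) = B) * cov(S, B): the reward is a nonnegative mixture
   of coverage functions.  Coverage is monotone and "submodular" in the form
     f S <= f A + sum_{v in S \ A} (f (A + v) - f A),
   and both properties pass to nonnegative mixtures.  The classical
   Nemhauser-Wolsey-Fisher argument then shows that for any such f with
   f(empty) = 0, the greedy set of size k satisfies
     f S - f S_{t+1} <= (1 - 1/k) (f S - f S_t)
   for every S of size k, hence f S - f S_k <= (1 - 1/k)^k f S <= f S / e. *)
Set Warnings "-notation-overridden,-ambiguous-paths,-notation-incompatible-prefix".
From HB Require Import structures.
From mathcomp Require Import all_boot all_order all_algebra.
From mathcomp Require Import all_classical all_reals all_analysis.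
From mathcomp Require Import measurable_realfun lra.
Import Order.TTheory GRing.Theory Num.Theory.
Set Implicit Arguments. Unset Strict Implicit. Unset Printing Implicit Defensive.
Local Open Scope ring_scope.

Lemma card_bigcup_le (V I : finType) (A : {set I}) (F : I -> {set V}) :
  (#|\bigcup_(v in A) F v| <= \sum_(v in A) #|F v|)%N.
Proof.
apply: (big_ind2 (fun (X : {set V}) (n : nat) => #|X| <= n)%N) => //.
- by rewrite cards0.
- move=> X1 X2 n1 n2 h1 h2; apply: leq_trans (leq_card_setU _ _) _.
  exact: leq_add.
Qed.

Section Coverage.
Variables (V : finType) (F : V -> {set V}).

(* [covered S B]: the elements covered by the members of S that are active,
   i.e. lie in B.  With F = desc and B the immune pattern, these are the saved
   nodes. *)
Definition covered (S B : {set V}) : {set V} := \bigcup_(i in S | i \in B) F i.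

Definition cov (S B : {set V}) : nat := #|covered S B|.

Lemma covered_mono (A S B : {set V}) :
  A \subset S -> covered A B \subset covered S B.
Proof.
move=> AS; apply/bigcupsP => i /andP[iA iB].
by apply: (bigcup_max i) => //; rewrite (fintype.subsetP AS) // iB.
Qed.

Lemma cov_mono (A S B : {set V}) : A \subset S -> (cov A B <= cov S B)%N.
Proof. by move=> AS; apply/subset_leq_card/covered_mono. Qed.

(* Submodularity of coverage, in the form used by the greedy argument: every
   element newly covered by S is newly covered by a single v in S \ A. *)
Lemma cov_sub (A S B : {set V}) :
  (cov S B <= cov A B + \sum_(v in S :\: A) (cov (v |: A) B - cov A B))%N.
Proof.
have split_cover : covered S B \subset
    covered A B :|: \bigcup_(v in S :\: A) (covered (v |: A) B :\: covered A B).
  apply/fintype.subsetP => j /bigcupP[i /andP[iS iB] jFi].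
  rewrite inE; case: (boolP (j \in covered A B)) => //= jA.
  have iA : i \notin A.
    by apply: contra jA => iA; apply/bigcupP; exists i; rewrite ?iA.
  apply/bigcupP; exists i; first by rewrite inE iA.
  by rewrite inE jA; apply/bigcupP; exists i; rewrite // !inE eqxx.
apply: leq_trans (subset_leq_card split_cover) _.
apply: leq_trans (leq_card_setU _ _) _; rewrite leq_add2l.
apply: leq_trans (card_bigcup_le _ _) _; apply: leq_sum => v _.
by rewrite cardsD (finset.setIidPr (covered_mono _ (finset.subsetUr _ _))).
Qed.

End Coverage.

Section WeightedCoverage.
Variables (R : realType) (V : finType) (F : V -> {set V}) (p : {set V} -> R).
Hypothesis p_ge0 : forall B, 0 <= p B.

Definition rho (A : {set V}) : R := \sum_(B : {set V}) (cov F A B)%:R * p B.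

Lemma rho_set0 : rho finset.set0 = 0.
Proof.
by apply: big1 => B _; rewrite /cov /covered big_pred0 ?cards0 ?mul0r // => i;
  rewrite inE.
Qed.

Lemma rho_mono (A S : {set V}) : A \subset S -> rho A <= rho S.
Proof.
move=> AS; apply: ler_sum => B _; apply: ler_wpM2r => //.
by rewrite ler_nat cov_mono.
Qed.

Lemma rho_sub (A S : {set V}) :
  rho S <= rho A + \sum_(v in S :\: A) (rho (v |: A) - rho A).
Proof.
have -> : \sum_(v in S :\: A) (rho (v |: A) - rho A) =
    \sum_(B : {set V})
      (\sum_(v in S :\: A) ((cov F (v |: A) B)%:R - (cov F A B)%:R)) * p B.
  under [RHS]eq_bigr do rewrite mulr_suml.
  rewrite exchange_big /=; apply: eq_bigr => v _.
  by rewrite /rho -sumrB; apply: eq_bigr => B _; rewrite mulrBl.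
rewrite /rho -big_split /=; apply: ler_sum => B _.
rewrite -mulrDl; apply: ler_wpM2r => //.
have -> : \sum_(v in S :\: A) ((cov F (v |: A) B)%:R - (cov F A B)%:R) =
    (\sum_(v in S :\: A) (cov F (v |: A) B - cov F A B))%:R :> R.
  by rewrite natr_sum; apply: eq_bigr => v _; rewrite natrB ?cov_mono ?finset.subsetUr.
by rewrite -natrD ler_nat cov_sub.
Qed.

End WeightedCoverage.

Lemma greedy_set0 (V : finType) (u : nat -> V) : greedy_set u 0 = finset.set0.
Proof. by apply/finset.setP => x; rewrite !inE; apply/existsP => -[[]]. Qed.

Lemma greedy_setS (V : finType) (u : nat -> V) (t : nat) :
  greedy_set u t.+1 = u t |: greedy_set u t.
Proof.
apply/finset.setP => x; rewrite !inE; apply/existsP/idP.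
- case=> i /eqP <-; have [it | ti] := ltnP i t.
    by apply/orP; right; apply/existsP; exists (Ordinal it).
  have -> : nat_of_ord i = t by apply/eqP; rewrite eqn_leq ti -ltnS ltn_ord.
  by rewrite eqxx.
- case/orP => [/eqP -> | /existsP[i /eqP <-]]; first by exists ord_max.
  by exists (widen_ord (leqnSn t) i).
Qed.

(* (1 - 1/k)^k <= 1/e, from 1 + x <= e^x. *)
Lemma one_sub_inv_expn_le (R : realType) (k : nat) : (1 <= k)%N ->
  (1 - k%:R^-1) ^+ k <= expR (-1) :> R.
Proof.
move=> k_ge1; have k_gt0 : (0 : R) < k%:R by rewrite ltr0n.
have c_ge0 : (0 : R) <= 1 - k%:R^-1 by rewrite subr_ge0 invf_le1 // ler1n.
apply: le_trans (lerXn2r k _ _ (expR_ge1Dx (- k%:R^-1))) _;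
  rewrite ?nnegrE ?expR_ge0 //.
by rewrite -expRM_natl mulrN mulfV ?gt_eqF.
Qed.

Section Greedy.
Variables (R : realType) (V : finType) (f : {set V} -> R).
Hypothesis f_set0 : f finset.set0 = 0.
Hypothesis f_mono : forall A S : {set V}, A \subset S -> f A <= f S.
Hypothesis f_sub : forall A S : {set V},
  f S <= f A + \sum_(v in S :\: A) (f (v |: A) - f A).

Variables (u : nat -> V) (k : nat).
Hypothesis greedy_choice : forall t, (t < k)%N ->
  forall v, v \notin greedy_set u t ->
    f (v |: greedy_set u t) - f (greedy_set u t) <=
    f (u t |: greedy_set u t) - f (greedy_set u t).

(* One greedy step closes at least a 1/k fraction of the remaining gap to any
   set of size k, since one of its at most k missing elements gains that much. *)
Lemma greedy_step (S : {set V}) (t : nat) : #|S| = k -> (t < k)%N ->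
  f S - f (greedy_set u t.+1) <= (1 - k%:R^-1) * (f S - f (greedy_set u t)).
Proof.
move=> Sk tk; set A := greedy_set u t.
set D := f (u t |: A) - f A.
have k_gt0 : (0 : R) < k%:R by rewrite ltr0n (leq_ltn_trans (leq0n t) tk).
have D_ge0 : 0 <= D by rewrite subr_ge0 f_mono ?finset.subsetUr.
have gap_le : f S <= f A + k%:R * D.
  apply: le_trans (f_sub A S) _; rewrite lerD2l.
  apply: le_trans (_ : \sum_(v in S :\: A) D <= _).
    by apply: ler_sum => v; rewrite inE => /andP[vA _]; apply: greedy_choice.
  rewrite sumr_const -[D *+ _]mulr_natl ler_wpM2r // ler_nat -Sk.
  exact/subset_leq_card/finset.subsetDl.
have frac_le : (f S - f A) / k%:R <= D by rewrite ler_pdivrMr // mulrC lerBlDl.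
rewrite greedy_setS -/A (_ : f (u t |: A) = f A + D); last by rewrite addrC subrK.
rewrite mulrBl mul1r mulrC; lra.
Qed.

Lemma greedy_approx (S : {set V}) : (1 <= k)%N -> #|S| = k ->
  (1 - expR (-1)) * f S <= f (greedy_set u k).
Proof.
move=> k_ge1 Sk; set c : R := 1 - k%:R^-1.
have c_ge0 : 0 <= c by rewrite subr_ge0 invf_le1 ?ltr0n // ler1n.
have fS_ge0 : 0 <= f S by rewrite -f_set0 f_mono ?finset.sub0set.
have gap_le : forall t, (t <= k)%N -> f S - f (greedy_set u t) <= c ^+ t * f S.
  elim=> [|t IH] tk; first by rewrite greedy_set0 f_set0 subr0 expr0 mul1r.
  apply: le_trans (greedy_step Sk tk) _.
  by rewrite exprS -mulrA ler_wpM2l // IH // ltnW.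
have ck_le : c ^+ k * f S <= expR (-1) * f S.
  by rewrite ler_wpM2r // one_sub_inv_expn_le.
have := gap_le k (leqnn k); rewrite mulrBl mul1r; lra.
Qed.

End Greedy.

Section RandomSet.
Variables (d : measure_display) (Omega : measurableType d) (R : realType).
Variables (P : probability Omega R) (V : finType) (a : V -> Omega -> bool).
Hypothesis a_measurable : forall i, measurable_fun setT (a i).

Definition rset (w : Omega) : {set V} := [set i | a i w].

Definition rset_law (B : {set V}) : R :=
  fine 'E_P[fun w => (rset w == B)%:R].

(* The indicator of {rset = B} is a finite product of indicators of the
   measurable events {a i} or their complements, hence measurable. *)
Lemma rset_indicator_measurable (B : {set V}) :
  measurable_fun setT (fun w => (rset w == B)%:R : R).
Proof.
have -> : (fun w => (rset w == B)%:R : R) = fun w => \prod_(i : V)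
    (if i \in B then (if a i w then 1 else 0) else (if a i w then 0 else 1)).
  apply/funext => w; case: eqP => [<- | neqB].
    by rewrite big1 // => i _; rewrite inE; case: (a i w).
  have [i ai_neq | ai_eq] := pickP (fun i => a i w != (i \in B)).
    rewrite (bigD1 i) //=; move: ai_neq.
    by case: (a i w); case: (i \in B) => //= _; rewrite mul0r.
  exfalso; apply: neqB; apply/finset.setP => i.
  by rewrite inE; apply/eqP/negbFE/ai_eq.
apply: measurable_prod => i _.
by case: (i \in B); apply: measurable_fun_ifT => //; exact: measurable_cst.
Qed.

Lemma rset_indicator_Lfun (B : {set V}) :
  (fun w => (rset w == B)%:R : R) \in Lfun P 1.
Proof.
apply/Lfun1_integrable.
apply: (@le_integrable _ _ _ P _ measurableT _ (EFin \o cst (1 : R))).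
- exact/measurable_EFinP/rset_indicator_measurable.
- by move=> w _ /=; rewrite lee_fin; case: (_ == _); rewrite ?normr1 ?normr0.
- exact: finite_measure_integrable_cst.
Qed.

Lemma rset_law_ge0 (B : {set V}) : 0 <= rset_law B.
Proof. by apply/fine_ge0/expectation_ge0 => w; case: (_ == _). Qed.

Lemma expectation_rset (h : {set V} -> R) :
  ('E_P[fun w => h (rset w)] = (\sum_(B : {set V}) h B * rset_law B)%:E)%E.
Proof.
have -> : (fun w => h (rset w)) =
    \sum_(B <- index_enum {set V}) (h B \o* fun w => (rset w == B)%:R).
  apply/funext => w; rewrite fct_sumE (bigD1 (rset w)) //= eqxx mul1r.
  by rewrite big1 ?addr0 // => B /negbTE neqB; rewrite /= eq_sym neqB mul0r.
rewrite -(big_map (fun B => h B \o* fun w => (rset w == B)%:R) xpredT idfun).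
rewrite expectation_sum; last first.
  by move=> Y /mapP[B _ ->]; apply/Lfun_scale/rset_indicator_Lfun.
rewrite big_map -sumEFin; apply: eq_bigr => B _.
rewrite expectationZl ?rset_indicator_Lfun // EFinM fineK //.
exact/expectation_fin_num/rset_indicator_Lfun.
Qed.

End RandomSet.

Lemma reward_rho (R : realType) (d : measure_display) (Omega : measurableType d)
  (P : probability Omega R) (V : finType) (s : V) (parent : V -> V)
  (X : V -> {RV P >-> R}) (tau : {RV P >-> R}) (S : {set V}) :
  let a i w := tau w < Z s parent (fun v => X v) i w in
  reward P s parent (fun v => X v) tau S =
  (rho (desc s parent) (rset_law P a) S)%:E.
Proof.
move=> a; have a_meas : forall i, measurable_fun setT (a i).
  move=> i; apply: measurable_fun_ltr => //.
  rewrite /Z; under eq_fun do rewrite big_mkcond /=.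
  by apply: measurable_sum => j; case: (j \in _) => //; exact: measurable_cst.
rewrite /reward -expectation_rset //; congr ('E_P[_])%E; apply/funext => w.
congr (_%:R); rewrite /saved /cov /covered; apply: eq_card => j.
apply: (congr1 (fun Y : {set V} => j \in Y)).
by apply: eq_bigl => i /=; rewrite inE.
Qed.

Theorem mainTheorem5
  (R : realType) (d : measure_display) (Omega : measurableType d)
  (P : probability Omega R)
  (V : finType) (s : V) (parent : V -> V)
  (lam : R) (X : V -> {RV P >-> R}) (tau : {RV P >-> R})
  (k : nat) (u : nat -> V) :
  rooted_tree s parent ->
  0 < lam ->
  (forall v, v != s -> forall A : set R, measurable A ->
     distribution P (X v) A = exponential_prob lam A) ->
  (forall w, 0 <= tau w) ->
  mutually_independent P [set o : option V | o != Some s]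
    (fun o => if o is Some v then (X v : Omega -> R) else (tau : Omega -> R)) ->
  (1 <= k <= #|V|)%N ->
  (forall t, (t < k)%N ->
     u t \notin greedy_set u t /\
     forall v, v \notin greedy_set u t ->
       (reward P s parent (fun v => X v) tau (v |: greedy_set u t)
          - reward P s parent (fun v => X v) tau (greedy_set u t) <=
        reward P s parent (fun v => X v) tau (u t |: greedy_set u t)
          - reward P s parent (fun v => X v) tau (greedy_set u t))%E) ->
  forall S : {set V}, #|S| = k ->
    (((1 - expR (-1)) : R)%:E * reward P s parent (fun v => X v) tau S <=
     reward P s parent (fun v => X v) tau (greedy_set u k))%E.
Proof.
move=> _ _ _ _ _ /andP[k_ge1 _] greedy S Sk.
rewrite !reward_rho -EFinM lee_fin.
have p_ge0 := rset_law_ge0 P (fun i w => tau w < Z s parent (fun v => X v) i w).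
apply: greedy_approx => //.
- exact: rho_set0.
- by move=> A B; apply: rho_mono.
- by move=> A B; apply: rho_sub.
- move=> t tk v vt; have [_ /(_ v vt)] := greedy t tk.
  by rewrite !reward_rho -!EFinB lee_fin.
Qed.
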